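(* Let $d\in\mathbb{N}$, $N=d$, $\mathcal{N}=\{1,\dots,d\}$, and consider the switched system $x(t+1)=A_{\nu(t)}x(t)+b_{\nu(t)}\mu(t)$ with state set $\mathcal{X}=\mathbb{R}^d$ and set of admissible continuous controls $\mathcal{U}=\mathbb{R}$. Suppose each $A_i$, $i\in\mathcal{N}$, is an anti-diagonal matrix with all anti-diagonal entries nonzero, and each $b_i\in\mathbb{R}^d$ has its $(d-i+1)$-th entry nonzero and all other entries zero. Define $\mathcal{X}_0=\{0_d\}$, $\mathcal{X}_j=\{x\in\mathbb{R}^d: x_j\neq0,\ x_i=0 \text{ for all } i\neq j\}$ for $j=1,\dots,d$, and $\mathcal{X}_{d+1}=\mathbb{R}^d\setminus\bigcup_{j=0}^d\mathcal{X}_j$. Then $(\mathcal{X}_j)_{j=0}^{d+1}$ is a state-space abstraction of this switched system.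
   Context: A family $(\mathcal{X}_j)_{j=0}^n$ of subsets of $\mathcal{X}$ is a state-space abstraction of the switched system with subsystems $(A_i,b_i)$, $i\in\mathcal{N}$, and admissible continuous control set $\mathcal{U}$ if: (i) $\mathcal{X}_0=\{0_d\}$; (ii) the $\mathcal{X}_j$ are pairwise disjoint; (iii) $\bigcup_{j=0}^n\mathcal{X}_j=\mathcal{X}$; (iv) for each $j\in\{1,\dots,n\}$ and $i\in\mathcal{N}$ there is $k\in\{0,\dots,n\}$ with $A_ix\in\mathcal{X}_k$ for all $x\in\mathcal{X}_j$; (v) for each $j\in\{1,\dots,n\}$ and $i\in\mathcal{N}$ there is $\ell\in\{0,\dots,n\}$ such that for every $x\in\mathcal{X}_j$, $A_ix+b_i\mu(x)\in\mathcal{X}_\ell$ for some $\mu(x)\in\mathcal{U}\setminus\{0\}$. *)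

From HB Require Import structures.
From mathcomp Require Import all_boot all_order all_algebra.
From mathcomp Require Import reals.
Set Implicit Arguments. Unset Strict Implicit. Unset Printing Implicit Defensive.
Import Order.TTheory GRing.Theory Num.Theory.
Local Open Scope ring_scope.

(* The family (X_j)_{j=0..n} is indexed
   by 'I_n.+1, with X_0 = X ord0. *)
Definition state_space_abstraction (R : realType) (d n : nat) (I : Type)
  (A : I -> 'M[R]_d) (b : I -> 'cV[R]_d) (U : R -> Prop)
  (Xs : 'cV[R]_d -> Prop) (X : 'I_n.+1 -> 'cV[R]_d -> Prop) : Prop :=
  (forall x, X ord0 x <-> x = 0) /\
  (forall j k : 'I_n.+1, j != k -> forall x, X j x -> X k x -> False) /\
  (forall x, Xs x <-> exists j : 'I_n.+1, X j x) /\
  (forall j : 'I_n.+1, j != ord0 -> forall i : I,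
     exists k : 'I_n.+1, forall x, X j x -> X k (A i *m x)) /\
  (forall j : 'I_n.+1, j != ord0 -> forall i : I,
     exists l : 'I_n.+1, forall x, X j x ->
       exists mu : R, U mu /\ mu <> 0 /\ X l (A i *m x + mu *: b i)).

Definition axis_set (R : realType) (d : nat) (j : 'I_d) (x : 'cV[R]_d) : Prop :=
  x j ord0 != 0 /\ forall k : 'I_d, k != j -> x k ord0 = 0.

(* The family X_0, ..., X_{d+1} of the proposition (paper index j = val). *)
Definition prop2_X (R : realType) (d : nat) (j : 'I_d.+2) (x : 'cV[R]_d) : Prop :=
  match val j with
  | 0 => x = 0
  | m.+1 => if (m < d)%N then exists k : 'I_d, val k = m /\ axis_set k x
            else ~ (x = 0 \/ exists k : 'I_d, axis_set k x)
  end.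

From HB Require Import structures.
From mathcomp Require Import all_boot all_order all_algebra.
From mathcomp Require Import reals.
From mathcomp Require Import zify.
Set Implicit Arguments. Unset Strict Implicit. Unset Printing Implicit Defensive.
Import Order.TTheory GRing.Theory Num.Theory.
Local Open Scope ring_scope.

(* Each cell X_j is determined by the support of its states: empty, a given
   singleton, or of size at least 2.  An anti-diagonal matrix with nonzero
   anti-diagonal maps a support S to its mirror image rev @: S, so it
   permutes the cells.  Adding mu b_i only changes the single coordinate c
   where b_i is nonzero: if A_i x lies on the axis through c, a suitable mu
   cancels A_i x + mu b_i to 0; in every other case some nonzero mu makes
   coordinate c nonzero, which leaves a support of size at least 2. *)

Lemma addn_ord_eq_pred (d : nat) (r c : 'I_d) :
  (r + c)%N = d.-1 <-> c = rev_ord r.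
Proof.
split=> [e|->]; last by rewrite /=; have := ltn_ord r; lia.
by apply: val_inj => /=; move: e; have := ltn_ord r; have := ltn_ord c; lia.
Qed.

Lemma ord_eq_pred_sub (d : nat) (i k : 'I_d) :
  (val k = d.-1 - i)%N <-> k = rev_ord i.
Proof.
split=> [e|->]; last by rewrite /=; have := ltn_ord i; lia.
by apply: val_inj => /=; move: e; rewrite /val /=; have := ltn_ord i; have := ltn_ord k; lia.
Qed.

Lemma set_card_cases (T : finType) (S : {set T}) :
  S = set0 \/ (exists k, S = [set k]) \/ (1 < #|S|)%N.
Proof.
case: (ltngtP #|S| 1) => [|gt1|/eqP/cards1P]; [|by right; right|by right; left].
by rewrite ltnS leqn0 => /eqP/cards0_eq; left.
Qed.

Lemma exists_nonzero_shift (R : numDomainType) (a beta : R) :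
  beta != 0 -> exists2 mu : R, mu != 0 & a + mu * beta != 0.
Proof.
move=> nz_beta; have [sum0|sum_nz] := eqVneq (a + beta) 0.
  by exists 2; rewrite ?pnatr_eq0 // mulr_natl mulr2n addrA sum0 add0r.
by exists 1; rewrite ?oner_eq0 ?mul1r.
Qed.

Section Support.
Variables (R : nmodType) (d : nat).

Definition supp (x : 'cV[R]_d) : {set 'I_d} := [set k | x k ord0 != 0].

Lemma supp_eq0P (x : 'cV[R]_d) : reflect (x = 0) (supp x == set0).
Proof.
apply: (iffP eqP) => [S0|->]; last by apply/setP => k; rewrite !inE mxE eqxx.
apply/matrixP => k j; rewrite (ord1 j) mxE.
by move/setP/(_ k): S0; rewrite !inE => /negbFE/eqP.
Qed.

End Support.

Section AntiDiagonal.
Variables (R : idomainType) (d : nat) (A : 'M[R]_d).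
Hypothesis A_off : forall r s : 'I_d, s != rev_ord r -> A r s = 0.
Hypothesis A_anti : forall r : 'I_d, A r (rev_ord r) != 0.

Lemma mulmx_antidiag (x : 'cV[R]_d) r :
  (A *m x) r ord0 = A r (rev_ord r) * x (rev_ord r) ord0.
Proof.
rewrite mxE (bigD1 (rev_ord r)) //= big1 ?addr0 // => s ns.
by rewrite A_off ?mul0r.
Qed.

Lemma supp_mulmx_antidiag (x : 'cV[R]_d) : supp (A *m x) = (@rev_ord d) @: supp x.
Proof.
apply/setP => r; rewrite -[in RHS](rev_ordK r) mem_imset; last exact: rev_ord_inj.
by rewrite !inE mulmx_antidiag mulf_eq0 negb_or A_anti.
Qed.

End AntiDiagonal.

Section Control.
Variables (R : numFieldType) (d : nat) (b : 'cV[R]_d) (c : 'I_d).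
Hypothesis b_off : forall k : 'I_d, k != c -> b k ord0 = 0.
Hypothesis b_on : b c ord0 != 0.

Lemma setD1_supp_addZ (y : 'cV[R]_d) mu : supp (y + mu *: b) :\ c = supp y :\ c.
Proof.
apply/setP => k; rewrite !inE !mxE.
by have [//|nkc] := eqVneq k c; rewrite b_off // mulr0 addr0.
Qed.

Lemma addZ_supp1_eq0 (y : 'cV[R]_d) :
  supp y = [set c] -> exists2 mu, mu != 0 & y + mu *: b = 0.
Proof.
move=> /setP Sy; have := Sy c; rewrite !inE eqxx => yc.
exists (- (y c ord0 / b c ord0)); first by rewrite oppr_eq0 mulf_neq0 ?invr_eq0.
apply/matrixP => k j; rewrite (ord1 j) !mxE.
have [->|nkc] := eqVneq k c; first by rewrite mulNr divfK ?subrr.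
by move: (Sy k); rewrite !inE (negbTE nkc) (b_off nkc) => /negbFE/eqP->; rewrite mulr0 addr0.
Qed.

Lemma exists_addZ_supp_gt1 (y : 'cV[R]_d) :
  supp y :\ c != set0 -> exists2 mu, mu != 0 & (1 < #|supp (y + mu *: b)|)%N.
Proof.
move=> yc; have [mu nz_mu ync] := exists_nonzero_shift (y c ord0) b_on.
exists mu => //; rewrite (cardsD1 c) setD1_supp_addZ inE !mxE ync.
by rewrite add1n ltnS card_gt0.
Qed.

End Control.

Section Cells.
Variables (R : realType) (d : nat).
Implicit Types (x : 'cV[R]_d) (k : 'I_d) (j : 'I_d.+2).

Definition axis_cell k : 'I_d.+2 := @Ordinal d.+2 k.+1 (leqW (ltn_ord k)).

Variant cell_spec : 'I_d.+2 -> Type :=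
  | CellOrigin : cell_spec ord0
  | CellAxis k : cell_spec (axis_cell k)
  | CellRest : cell_spec ord_max.

Lemma cellP j : cell_spec j.
Proof.
case: j => [[|m] lt_m]; first by rewrite (_ : Ordinal _ = ord0); [exact: CellOrigin | exact: val_inj].
have [lt_md|le_dm] := ltnP m d.
  by rewrite (_ : Ordinal _ = axis_cell (Ordinal lt_md)); [exact: CellAxis | exact: val_inj].
by rewrite (_ : Ordinal _ = ord_max); [exact: CellRest | apply: val_inj => /=; lia].
Qed.

Lemma axis_setE k x : axis_set k x <-> supp x = [set k].
Proof.
split=> [[xk xr]|/setP Sx].
  apply/setP => r; rewrite !inE.
  by have [->|nrk] := eqVneq r k; [exact: xk | rewrite xr ?eqxx].
split; first by move: (Sx k); rewrite !inE eqxx.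
by move=> r nrk; move: (Sx r); rewrite !inE (negbTE nrk) => /negbFE/eqP.
Qed.

Lemma prop2_X_origin x : prop2_X ord0 x <-> supp x = set0.
Proof. by split=> [/supp_eq0P/eqP | /eqP/supp_eq0P]. Qed.

Lemma prop2_X_axis k x : prop2_X (axis_cell k) x <-> supp x = [set k].
Proof.
rewrite /prop2_X /= ltn_ord -axis_setE.
by split=> [[k' [/val_inj <-]] | ] //; exists k.
Qed.

Lemma prop2_X_rest x : prop2_X ord_max x <-> (1 < #|supp x|)%N.
Proof.
rewrite /prop2_X /= ltnn.
have [S0|[[k S1]|gt1]] := set_card_cases (supp x).
- rewrite S0 cards0; split=> [nx|//]; case: nx; left; exact/supp_eq0P/eqP.
- rewrite S1 cards1; split=> [nx|//]; case: nx; right; exists k; exact/axis_setE.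
- split=> // _ [/supp_eq0P/eqP S0 | [k /axis_setE S1]]; move: gt1.
    by rewrite S0 cards0.
  by rewrite S1 cards1.
Qed.

Lemma prop2_X_unique j l x : prop2_X j x -> prop2_X l x -> j = l.
Proof.
case: (cellP j) => [|j'|]; rewrite ?prop2_X_origin ?prop2_X_axis ?prop2_X_rest => Sj;
case: (cellP l) => [|l'|]; rewrite ?prop2_X_origin ?prop2_X_axis ?prop2_X_rest => Sl //;
  first [move: Sl; rewrite Sj | move: Sj; rewrite Sl]; rewrite ?cards0 ?cards1 //.
all: try by move=> S01; have /= := congr1 (fun S : {set 'I_d} => #|S|) S01; rewrite cards0 cards1.
by move=> S1; rewrite (set1_inj S1).
Qed.

Lemma prop2_X_cover x : exists j, prop2_X j x.
Proof.
have [S0|[[k S1]|gt1]] := set_card_cases (supp x).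
- by exists ord0; apply/prop2_X_origin.
- by exists (axis_cell k); apply/prop2_X_axis.
- by exists ord_max; apply/prop2_X_rest.
Qed.

Section Dynamics.
Variable A : 'M[R]_d.
Hypothesis A_off : forall r s : 'I_d, s != rev_ord r -> A r s = 0.
Hypothesis A_anti : forall r : 'I_d, A r (rev_ord r) != 0.

Lemma prop2_X_mulmx_antidiag j :
  exists l, forall x, prop2_X j x -> prop2_X l (A *m x).
Proof.
case: (cellP j) => [|k|].
- by exists ord0 => x ->; rewrite mulmx0.
- exists (axis_cell (rev_ord k)) => x; rewrite !prop2_X_axis => Sx.
  by rewrite supp_mulmx_antidiag // Sx imset_set1.
- exists ord_max => x; rewrite !prop2_X_rest supp_mulmx_antidiag //.
  by rewrite card_imset //; exact: rev_ord_inj.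
Qed.

Variables (b : 'cV[R]_d) (c : 'I_d).
Hypothesis b_off : forall k : 'I_d, k != c -> b k ord0 = 0.
Hypothesis b_on : b c ord0 != 0.

Lemma prop2_X_control_step j : j != ord0 ->
  exists l, forall x, prop2_X j x ->
    exists2 mu, mu != 0 & prop2_X l (A *m x + mu *: b).
Proof.
have to_rest x : supp (A *m x) :\ c != set0 ->
    exists2 mu, mu != 0 & prop2_X ord_max (A *m x + mu *: b).
  move=> /(exists_addZ_supp_gt1 b_off b_on) [mu nz_mu gt1].
  by exists mu => //; apply/prop2_X_rest.
case: (cellP j) => [|k|] // _.
  have [kc|nkc] := eqVneq (rev_ord k) c.
    exists ord0 => x /prop2_X_axis Sx; apply: (addZ_supp1_eq0 b_off b_on).
    by rewrite supp_mulmx_antidiag // Sx imset_set1 kc.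
  exists ord_max => x /prop2_X_axis Sx; apply: to_rest.
  rewrite supp_mulmx_antidiag // Sx imset_set1.
  by apply/set0Pn; exists (rev_ord k); rewrite !inE nkc eqxx.
exists ord_max => x /prop2_X_rest.
rewrite -(card_imset _ rev_ord_inj) -(supp_mulmx_antidiag A_off A_anti) => gt1.
apply: to_rest; apply: contraTneq gt1 => S0.
by rewrite -leqNgt (cardsD1 c) S0 cards0 addn0 leq_b1.
Qed.

End Dynamics.

End Cells.

Theorem proposition2 (R : realType) (d : nat)
  (A : 'I_d -> 'M[R]_d) (b : 'I_d -> 'cV[R]_d)
  (hA0 : forall (i : 'I_d) (r c : 'I_d), (r + c)%N <> d.-1 -> A i r c = 0)
  (hA1 : forall (i : 'I_d) (r c : 'I_d), (r + c)%N = d.-1 -> A i r c != 0)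
  (hb0 : forall (i k : 'I_d), (val k <> d.-1 - i)%N -> b i k ord0 = 0)
  (hb1 : forall (i k : 'I_d), (val k = d.-1 - i)%N -> b i k ord0 != 0) :
  state_space_abstraction A b (fun _ : R => True) (fun _ : 'cV[R]_d => True)
    (@prop2_X R d).
Proof.
have A_off i r s : s != rev_ord r -> A i r s = 0.
  by move=> /eqP ns; apply: hA0 => /addn_ord_eq_pred.
have A_anti i r : A i r (rev_ord r) != 0 by apply/hA1/addn_ord_eq_pred.
have b_off i k : k != rev_ord i -> b i k ord0 = 0.
  by move=> /eqP nk; apply: hb0 => /ord_eq_pred_sub.
have b_on i : b i (rev_ord i) ord0 != 0 by apply/hb1/ord_eq_pred_sub.
split; first by [].
split; first by move=> j l /eqP njl x Xj Xl; apply/njl/(prop2_X_unique Xj Xl).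
split; first by move=> x; split=> // _; exact: prop2_X_cover.
split; first by move=> j _ i; exact: prop2_X_mulmx_antidiag (A_off i) (A_anti i) j.
move=> j nj i; have [l step] := prop2_X_control_step (A_off i) (A_anti i) (b_off i) (b_on i) nj.
by exists l => x /step [mu nz_mu Xl]; exists mu; split; [|split; [exact/eqP|]].
Qed.
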